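(* Let $n\ge 2$, let $G=K_n$ on vertices $v_1,\dots,v_n$ with edge weights $w_{\{i,j\}}\in(0,1)$, and let $\alpha\in(0,1)$. Then $\operatorname{cptw}(G,\alpha)=\left\lceil \log_{P_0}(1-\alpha)\right\rceil$, where $P_0=\min_{1\le i\le n}\prod_{j\ne i}(1-w_{\{i,j\}})$.
   Context: Let $G$ be a finite simple graph in which each edge $uv$ has a weight $w_{uv}\in(0,1)$. Weighted zero forcing: start with a set $B\subseteq V(G)$ of blue vertices, all other vertices white. In each round, simultaneously, for every blue vertex $u$ that has exactly one white neighbor $v$ (with respect to the coloring at the start of the round), $u$ attempts to force $v$, succeeding with probability $w_{uv}$, all attempts being independent; a white vertex becomes blue at the end of the round if at least one attempt on it succeeds. $B$ is a weighted zero forcing set of $G$ if this process can eventually color all of $V(G)$ blue (equivalently, $B$ is a zero forcing set of the underlying unweighted graph under the standard rule); $\operatorname{Z}(G)$ is the minimum size of such a set. $\operatorname{ptw}(G,B)$ is the random variable giving the round in which the last white vertex becomes blue ($0$ if $B=V(G)$). For $\alpha\in(0,1)$, $\operatorname{cptw}(G,B,\alpha)$ is the least $t\ge 0$ with $\Pr(\operatorname{ptw}(G,B)\le t)\ge\alpha$, and $\operatorname{cptw}(G,\alpha)$ is the minimum of $\operatorname{cptw}(G,B,\alpha)$ over weighted zero forcing sets $B$ with $|B|=\operatorname{Z}(G)$. *)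

From HB Require Import structures.
From mathcomp Require Import all_boot all_order all_algebra.
From mathcomp Require Import reals exp.
Set Implicit Arguments. Unset Strict Implicit. Unset Printing Implicit Defensive.
Import Order.TTheory GRing.Theory Num.Theory.
Local Open Scope ring_scope.

Section WeightedZeroForcing.
Variables (R : realType) (T : finType) (adj : rel T) (w : T -> T -> R).

Definition white_nbrs (S : {set T}) (u : T) : {set T} :=
  [set v | adj u v & v \notin S].

Definition forces (S : {set T}) (u v : T) : bool :=
  (u \in S) && (white_nbrs S u == [set v]).

Definition zf_step (S : {set T}) : {set T} :=
  S :|: [set v | [exists u, forces S u v]].

Definition zero_forcing_set (B : {set T}) : bool :=
  iter #|T| zf_step B == [set: T].

(* zero forcing number Z(G) (V(G) is always a zero forcing set) *)
Definition Znum : nat :=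
  \big[minn/#|T|]_(B : {set T} | zero_forcing_set B) #|B|.

(* probability that white vertex v becomes blue in a round starting at S:
   at least one of the independent attempts on v succeeds *)
Definition p_col (S : {set T}) (v : T) : R :=
  1 - \prod_(u | forces S u v) (1 - w u v).

(* transition probability from blue set S to blue set S' in one round
   (distinct white vertices are coloured independently) *)
Definition trans (S S' : {set T}) : R :=
  if S \subset S' then
    \prod_(v in ~: S) (if v \in S' then p_col S v else 1 - p_col S v)
  else 0.

(* prob_done t S = Pr(ptw(G,S) <= t) *)
Fixpoint prob_done (t : nat) (S : {set T}) : R :=
  match t with
  | 0%N => (S == [set: T])%:R
  | t'.+1 => if S == [set: T] then 1
             else \sum_(S' : {set T}) trans S S' * prob_done t' S'
  end.

(* t = cptw(G,B,alpha): least t >= 0 with Pr(ptw(G,B) <= t) >= alpha *)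
Definition is_cptw_set (B : {set T}) (alpha : R) (t : nat) : Prop :=
  alpha <= prob_done t B /\ (forall s : nat, (s < t)%N -> prob_done s B < alpha).

(* t = cptw(G,alpha): minimum of cptw(G,B,alpha) over zero forcing sets
   B with |B| = Z(G) *)
Definition is_cptw (alpha : R) (t : nat) : Prop :=
  (exists B : {set T}, [/\ zero_forcing_set B, #|B| = Znum & is_cptw_set B alpha t])
  /\ (forall (B : {set T}) (t' : nat), zero_forcing_set B -> #|B| = Znum ->
        is_cptw_set B alpha t' -> (t <= t')%N).

End WeightedZeroForcing.

Definition Kn_adj (n : nat) : rel 'I_n := fun i j => i != j.

(* P_0 = min_i prod_{j <> i} (1 - w_{ij}); the default 1 of the min is
   irrelevant for n >= 1 since every product lies in (0,1]. *)
Definition P0 (R : realType) (n : nat) (w : 'I_n -> 'I_n -> R) : R :=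
  \big[Num.min/1]_(i < n) \prod_(j < n | j != i) (1 - w i j).

Definition logb (R : realType) (b x : R) : R := ln x / ln b.

From HB Require Import structures.
From mathcomp Require Import all_boot all_order all_algebra.
From mathcomp Require Import reals exp.
From mathcomp Require Import ring lra zify.
Set Implicit Arguments. Unset Strict Implicit. Unset Printing Implicit Defensive.
Import Order.TTheory GRing.Theory Num.Theory.
Local Open Scope ring_scope.

(* 1. Zero forcing on K_n: a blue vertex of a set B sees every vertex of
      ~: B as a white neighbour, so B can only force when |~: B| = 1.
      Hence the minimum zero forcing sets are exactly the complements
      ~: [set v], and Z(K_n) = n - 1.
   2. From ~: [set v] the weighted process is a two-state chain: each round
      the last white vertex v stays white with probability
      q v = prod_{j <> v} (1 - w v j), so Pr(ptw <= t) = 1 - (q v)^t.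
   3. For 0 < q < 1, the least t with 1 - q^t >= alpha is the natural number
      geom_rounds (1 - alpha) q = ceil(ln (1 - alpha) / ln q), which is
      nondecreasing in q.
   4. So cptw(K_n, alpha) is the minimum over v of geom_rounds (1 - alpha) (q v),
      attained at the vertex minimising q v, i.e. at q v = P0. *)

Definition geom_rounds {R : realType} (a q : R) : nat :=
  `|Num.ceil (ln a / ln q)|%N.

Section GeometricRounds.
Variables (R : realType) (a : R).
Hypothesis a_bd : 0 < a < 1.

Lemma ceil_log_geom_rounds (q : R) : 0 < q < 1 ->
  Num.ceil (ln a / ln q) = (geom_rounds a q)%:Z.
Proof.
case/andP: a_bd => a0 a1 /andP[q0 q1].
have lnq_lt0 : ln q < 0 by rewrite -ln1 ltr_ln ?posrE.
rewrite /geom_rounds gez0_abs // ceil_ge0.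
apply: (@lt_le_trans _ _ 0); first by rewrite ltrN10.
by rewrite ler_ndivlMr // mul0r ln_le0 // ltW.
Qed.

Lemma geom_roundsP (q : R) (s : nat) : 0 < q < 1 ->
  (q ^+ s <= a) = (geom_rounds a q <= s)%N.
Proof.
move=> q_bd; rewrite -lez_nat -ceil_log_geom_rounds //.
case/andP: a_bd => a0 _; case/andP: q_bd => q0 q1.
have lnq_lt0 : ln q < 0 by rewrite -ln1 ltr_ln ?posrE.
rewrite ceil_le_int -(ler_ln (x := q ^+ s)) ?posrE ?exprn_gt0 // lnXn //.
by rewrite ler_ndivrMr // -mulr_natr mulrC pmulrn.
Qed.

Lemma geom_rounds_mono (q q' : R) : 0 < q <= q' -> q' < 1 ->
  (geom_rounds a q <= geom_rounds a q')%N.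
Proof.
move=> /andP[q0 qq'] q'1.
have q_bd : 0 < q < 1 by rewrite q0 (le_lt_trans qq' q'1).
have q'_bd : 0 < q' < 1 by rewrite q'1 andbT (lt_le_trans q0 qq').
rewrite -geom_roundsP //; apply: le_trans (_ : q' ^+ geom_rounds a q' <= a).
  by rewrite lerXn2r // nnegrE ltW // (lt_le_trans q0 qq').
by rewrite geom_roundsP.
Qed.

End GeometricRounds.

Section WeightedZeroForcingFacts.
Variables (R : realType) (T : finType) (adj : rel T) (w : T -> T -> R).

(* Z(G) as a minimum in the canonical order of nat (the default #|T| of the
   defining big operator is not neutral for minn). *)
Lemma Znum_bigmin :
  Znum adj = \big[Order.min/#|T|]_(C | zero_forcing_set adj C) #|C|.
Proof. by apply: big_ind2 => // x1 x2 y1 y2 -> ->. Qed.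

Lemma Znum_le_card (B : {set T}) : zero_forcing_set adj B -> (Znum adj <= #|B|)%N.
Proof.
by move=> zfB; rewrite Znum_bigmin; exact: (bigmin_le_cond #|T| (fun C : {set T} => #|C|) zfB).
Qed.

Lemma Znum_ge (m : nat) : (m <= #|T|)%N ->
  (forall B : {set T}, zero_forcing_set adj B -> (m <= #|B|)%N) ->
  (m <= Znum adj)%N.
Proof.
move=> mT m_lb; apply: (big_ind (fun k => m <= k)%N) => // x y mx my.
by rewrite leq_min mx my.
Qed.

Lemma stalled_not_zf (B : {set T}) :
  zf_step adj B = B -> B != setT -> ~~ zero_forcing_set adj B.
Proof.
move=> stuck BT; rewrite /zero_forcing_set.
suff -> : forall k, iter k (zf_step adj) B = B by [].
by elim=> //= k ->.
Qed.

Lemma zf_of_step_full (B : {set T}) : (0 < #|T|)%N ->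
  zf_step adj B = setT -> zero_forcing_set adj B.
Proof.
move=> T_gt0 stepB; have stepT : zf_step adj setT = setT by rewrite /zf_step setTU.
have iterT k : iter k (zf_step adj) setT = setT by elim: k => //= k ->.
by rewrite /zero_forcing_set -(prednK T_gt0) iterSr stepB iterT.
Qed.

Lemma prob_done_full (t : nat) : prob_done adj w t setT = 1.
Proof. by case: t => [|t] /=; rewrite eqxx. Qed.

Lemma prob_done_absorb (S : {set T}) (t : nat) : S != setT ->
  (forall S', S' != S -> S' != setT -> trans adj w S S' = 0) ->
  trans adj w S setT = 1 - trans adj w S S ->
  prob_done adj w t S = 1 - trans adj w S S ^+ t.
Proof.
move=> ST other_0 to_full; elim: t => [|t IH] /=.
  by rewrite (negbTE ST) expr0 subrr.
rewrite (negbTE ST) (bigD1 S) //= (bigD1 setT) /=; last by rewrite eq_sym ST.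
rewrite big1 => [|S' /andP[S'S S'T]]; last by rewrite other_0 // mul0r.
by rewrite addr0 IH prob_done_full to_full exprS; ring.
Qed.

Lemma cptw_set_geometric (B : {set T}) (q alpha : R) (t : nat) :
  0 < q < 1 -> 0 < alpha < 1 ->
  (forall s, prob_done adj w s B = 1 - q ^+ s) ->
  is_cptw_set adj w B alpha t <-> t = geom_rounds (1 - alpha) q.
Proof.
move=> q_bd /andP[alpha0 alpha1] pdB.
have a_bd : 0 < 1 - alpha < 1 by apply/andP; split; lra.
have reach s : (alpha <= prob_done adj w s B) = (geom_rounds (1 - alpha) q <= s)%N.
  rewrite pdB -geom_roundsP //; apply/idP/idP => h; lra.
split=> [[reach_t before_t] | ->].
  apply/eqP; rewrite eqn_leq -reach reach_t andbT leqNgt; apply/negP => lt_t.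
  by have := before_t _ lt_t; rewrite ltNge reach leqnn.
by split=> [|s]; rewrite ?reach // ltNge reach -ltnNge.
Qed.

End WeightedZeroForcingFacts.

Section CompleteGraph.
Variables (R : realType) (n : nat) (w : 'I_n -> 'I_n -> R).
Hypothesis n_ge2 : (2 <= n)%N.
Hypothesis w_sym : forall i j, w i j = w j i.
Hypothesis w_bd : forall i j, i != j -> 0 < w i j < 1.

Local Notation adj := (Kn_adj (n:=n)).

Lemma exists_other (v : 'I_n) : exists u : 'I_n, u != v.
Proof.
have : (0 < #|~: [set v]|)%N by rewrite cardsC1 card_ord; case: n n_ge2 => [|[]].
by case/card_gt0P => u; rewrite !inE => uv; exists u.
Qed.

Lemma Kn_white_nbrs (B : {set 'I_n}) (u : 'I_n) : u \in B ->
  white_nbrs adj B u = ~: B.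
Proof.
move=> uB; apply/setP => x; rewrite !inE /Kn_adj.
by case: (eqVneq u x) => [<-|]; rewrite ?uB.
Qed.

Lemma Kn_stalled (B : {set 'I_n}) : (1 < #|~: B|)%N -> zf_step adj B = B.
Proof.
move=> two_white; apply/setUidPl/subsetP => x; rewrite inE.
case/existsP=> u /andP[uB]; rewrite Kn_white_nbrs // => /eqP white1.
by move: two_white; rewrite white1 cards1.
Qed.

Lemma Kn_zf_white (B : {set 'I_n}) : zero_forcing_set adj B -> (#|~: B| <= 1)%N.
Proof.
move=> zfB; rewrite leqNgt; apply/negP => two_white.
have BT : B != setT by apply: contraTneq two_white => ->; rewrite setCT cards0.
by move: zfB; apply/negP/stalled_not_zf => //; exact: Kn_stalled.
Qed.

Lemma Kn_forces_comp (v u x : 'I_n) :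
  forces adj (~: [set v]) u x = (u != v) && (x == v).
Proof.
rewrite /forces !inE; case: (eqVneq u v) => //= uv.
rewrite Kn_white_nbrs ?setCK; last by rewrite !inE uv.
by apply/eqP/eqP => [/set1_inj -> | ->].
Qed.

Lemma Kn_zf_comp (v : 'I_n) : zero_forcing_set adj (~: [set v]).
Proof.
apply: zf_of_step_full; first by rewrite card_ord ltnW.
apply/setP => x; rewrite /zf_step in_setU in_setT.
case: (eqVneq x v) => [->|xv]; last by rewrite in_setC in_set1 xv.
have [u uv] := exists_other v.
by apply/orP; right; rewrite inE; apply/existsP; exists u; rewrite Kn_forces_comp uv eqxx.
Qed.

Lemma Kn_Znum : Znum adj = n.-1.
Proof.
have v0 : 'I_n := Ordinal (ltnW n_ge2).
apply/eqP; rewrite eqn_leq; apply/andP; split.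
  by rewrite -[n in n.-1]card_ord -(cardsC1 v0) Znum_le_card // Kn_zf_comp.
apply: Znum_ge => [|B zfB]; first by rewrite card_ord leq_pred.
rewrite -[n in n.-1]card_ord -(cardsC B) -subn1 leq_subLR addnC leq_add2r.
exact: Kn_zf_white.
Qed.

Lemma Kn_min_zf_comp (v : 'I_n) :
  zero_forcing_set adj (~: [set v]) /\ #|~: [set v]| = Znum adj.
Proof. by rewrite Kn_Znum cardsC1 card_ord Kn_zf_comp. Qed.

Lemma Kn_min_zfP (B : {set 'I_n}) : zero_forcing_set adj B ->
  #|B| = Znum adj -> exists v, B = ~: [set v].
Proof.
rewrite Kn_Znum => zfB cardB.
have : #|~: B| == 1%N by have := cardsC B; rewrite card_ord cardB; lia.
by case/cards1P => v Bv; exists v; rewrite -Bv setCK.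
Qed.

Definition stay_prob (v : 'I_n) : R := \prod_(j < n | j != v) (1 - w v j).

Lemma stay_prob_bd (v : 'I_n) : 0 < stay_prob v < 1.
Proof.
have w_bd' j : j != v -> 0 < w v j < 1 by move=> jv; apply: w_bd; rewrite eq_sym.
apply/andP; split.
  by apply: prodr_gt0 => j /w_bd' /andP[_]; rewrite subr_gt0.
have [u uv] := exists_other v; have /andP[wu0 wu1] := w_bd' u uv.
rewrite /stay_prob (bigD1 u) //=; apply: (@le_lt_trans _ _ (1 - w v u)).
  apply: ler_piMr; first by rewrite subr_ge0 ltW.
  apply: prodr_ile1 => j /andP[jv _]; have /andP[wj0 wj1] := w_bd' j jv.
  by apply/andP; split; lra.
lra.
Qed.

Lemma Kn_p_col (v : 'I_n) : p_col adj w (~: [set v]) v = 1 - stay_prob v.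
Proof.
rewrite /p_col /stay_prob (eq_bigl (fun u => u != v)) => [|u]; last first.
  by rewrite Kn_forces_comp eqxx andbT.
by congr (1 - _); apply: eq_bigr => u _; rewrite w_sym.
Qed.

Lemma superset_comp (v : 'I_n) (S : {set 'I_n}) :
  ~: [set v] \subset S -> S = ~: [set v] \/ S = setT.
Proof.
move=> sub; have [vS | vNS] := boolP (v \in S); [right | left].
  apply/eqP; rewrite eqEsubset subsetT /=; apply/subsetP => x _.
  by case: (eqVneq x v) => [-> // | xv]; apply: (subsetP sub); rewrite !inE xv.
apply/eqP; rewrite eqEsubset sub andbT; apply/subsetP => x xS.
by rewrite !inE; apply: contraNneq vNS => <-.
Qed.

Lemma Kn_trans_stay (v : 'I_n) : trans adj w (~: [set v]) (~: [set v]) = stay_prob v.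
Proof. by rewrite /trans subxx setCK big_set1 !inE eqxx /= Kn_p_col; ring. Qed.

Lemma Kn_trans_full (v : 'I_n) : trans adj w (~: [set v]) setT = 1 - stay_prob v.
Proof. by rewrite /trans subsetT setCK big_set1 in_setT Kn_p_col. Qed.

Lemma Kn_trans_other (v : 'I_n) (S : {set 'I_n}) :
  S != ~: [set v] -> S != setT -> trans adj w (~: [set v]) S = 0.
Proof.
rewrite /trans => Sv ST; case: ifP => // /superset_comp[] eS.
  by rewrite eS eqxx in Sv.
by rewrite eS eqxx in ST.
Qed.

Lemma Kn_prob_done (v : 'I_n) (t : nat) :
  prob_done adj w t (~: [set v]) = 1 - stay_prob v ^+ t.
Proof.
have vT : ~: [set v] != setT :> {set 'I_n}.
  by apply/negP => /eqP/setP/(_ v); rewrite !inE eqxx.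
rewrite prob_done_absorb // ?Kn_trans_stay ?Kn_trans_full //.
exact: Kn_trans_other.
Qed.

Lemma P0_le (v : 'I_n) : P0 w <= stay_prob v.
Proof. exact: bigmin_le. Qed.

Lemma P0_attained : exists v, P0 w = stay_prob v.
Proof.
have v0 : 'I_n := Ordinal (ltnW n_ge2).
exists [arg min_(i < v0) stay_prob i]%O; apply: bigmin_eq_arg => // i _.
by have /andP[_ /ltW] := stay_prob_bd i.
Qed.

Variable alpha : R.
Hypothesis alpha_bd : 0 < alpha < 1.

Lemma Kn_is_cptw (t : nat) :
  is_cptw adj w alpha t <->
  (exists v, t = geom_rounds (1 - alpha) (stay_prob v)) /\
  (forall v, t <= geom_rounds (1 - alpha) (stay_prob v))%N.
Proof.
have cptw_comp v s : is_cptw_set adj w (~: [set v]) alpha s <->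
    s = geom_rounds (1 - alpha) (stay_prob v).
  by apply: cptw_set_geometric; rewrite ?stay_prob_bd // => r; rewrite Kn_prob_done.
split=> [[[B [zfB cardB cptwB]] t_min] | [[v tv] t_min]].
  have [v Bv] := Kn_min_zfP zfB cardB; rewrite Bv cptw_comp in cptwB.
  split=> [|u]; first by exists v.
  have [zfu cardu] := Kn_min_zf_comp u.
  by apply: t_min zfu cardu _; rewrite cptw_comp.
split=> [|B t' zfB cardB].
  have [zfv cardv] := Kn_min_zf_comp v.
  by exists (~: [set v]); split; rewrite // cptw_comp.
by have [u ->] := Kn_min_zfP zfB cardB; rewrite cptw_comp => ->.
Qed.

End CompleteGraph.

Theorem mainTheorem7 (R : realType) (n : nat) (w : 'I_n -> 'I_n -> R) (alpha : R) :
  (2 <= n)%N ->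
  (forall i j, w i j = w j i) ->
  (forall i j, i != j -> 0 < w i j < 1) ->
  0 < alpha < 1 ->
  forall t : nat,
    is_cptw (Kn_adj (n:=n)) w alpha t <->
    (t%:Z = Num.ceil (logb (P0 w) (1 - alpha))).
Proof.
move=> n_ge2 w_sym w_bd alpha_bd t.
have a_bd : 0 < 1 - alpha < 1 by case/andP: alpha_bd => *; apply/andP; split; lra.
pose rounds v := geom_rounds (1 - alpha) (stay_prob w v).
have [v0 P0v0] := P0_attained n_ge2 w_bd.
have v0_min v : (rounds v0 <= rounds v)%N.
  have /andP[qv0 _] := stay_prob_bd n_ge2 w_bd v0.
  have /andP[_ qv1] := stay_prob_bd n_ge2 w_bd v.
  by apply: geom_rounds_mono; rewrite // qv0 -P0v0 P0_le.
rewrite /logb P0v0 ceil_log_geom_rounds ?stay_prob_bd // Kn_is_cptw //.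
split=> [[[v ->] t_min] | [->]]; last by split=> [|v]; [exists v0 | exact: v0_min].
by congr Posz; apply/eqP; rewrite eqn_leq t_min v0_min.
Qed.
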